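(* Let $k\ge2$ and set $z_{cr}=-\log\sigma+c_0\langle\sigma,\log\sigma\rangle\mathbf 1\in\Pi$. (i) For any $R>0$ and any $\epsilon>0$ small enough there exists $\eta=\eta(R,\epsilon)>0$ such that for all $z\in\Pi$ and $b\in\mathbb R^{k-1}$ with $|z|\le R$ and $|z-z_{cr}|+\min(|\cos b-\mathbf 1|,|\cos b+\mathbf 1|)\ge\epsilon$, one has $$|P_\sigma(\cos b\,e^{-z})|+|\sin b\,e^{-z}|\ge\eta.$$ (ii) There exist $\epsilon_0>0$ and $C>0$ such that for all $z\in\Pi$ and $b\in\mathbb R^{k-1}$ with $|z-z_{cr}|+|b-\pi\mathbf 1|\le\epsilon_0$, $$|P_\sigma(\cos b\,e^{-z})|+|\sin b\,e^{-z}|\ge C^{-1}\big(|z-z_{cr}|+|b-\pi\mathbf 1|\big).$$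
   Context: $\langle\cdot,\cdot\rangle$ and $|\cdot|$ are the Euclidean inner product and norm on $\mathbb R^{k-1}$; functions such as $\cos b$, $\sin b$, $e^{-z}$, $\log\sigma$ act componentwise, and $\cos b\,e^{-z}$ denotes the vector with components $\cos b_j\,e^{-z_j}$. $\mathbf 1=(1,\dots,1)$, $\sigma_j=\frac{j(k-j)}2$ for $j=1,\dots,k-1$, $c_0=1/\langle\sigma,\mathbf 1\rangle$, $\Pi=\{v\in\mathbb R^{k-1}:\langle\sigma,v\rangle=0\}$, and $P_\sigma v=v-\frac{\langle\sigma,v\rangle}{|\sigma|^2}\sigma$. *)

From HB Require Import structures.
From mathcomp Require Import all_boot all_order all_algebra.
From mathcomp Require Import all_classical all_reals all_analysis.
Set Implicit Arguments. Unset Strict Implicit. Unset Printing Implicit Defensive.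
Import Order.TTheory GRing.Theory Num.Theory.
Local Open Scope ring_scope.

Section Defs.
Variable R : realType.
Variable n : nat.

Definition dotv (u v : 'rV[R]_n) : R := \sum_(i < n) u 0 i * v 0 i.
Definition normv (v : 'rV[R]_n) : R := Num.sqrt (dotv v v).

Definition vmap (f : R -> R) (v : 'rV[R]_n) : 'rV[R]_n := \row_i f (v 0 i).
Definition vmul (u v : 'rV[R]_n) : 'rV[R]_n := \row_i (u 0 i * v 0 i).
Definition ones : 'rV[R]_n := \row_i 1.
End Defs.

(* sigma_j = j (k - j) / 2 for j = 1..k-1; index i : 'I_(k-1) stands for j = i+1 *)
Definition sigmav (R : realType) (k : nat) : 'rV[R]_(k.-1) :=
  \row_(i < k.-1) (((i.+1 * (k - i.+1))%N)%:R / 2).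

Definition c0 (R : realType) (k : nat) : R := (dotv (sigmav R k) (ones R _))^-1.

Definition PiSet (R : realType) (k : nat) : set 'rV[R]_(k.-1) :=
  [set v | dotv (sigmav R k) v = 0].

Definition Psigma (R : realType) (k : nat) (v : 'rV[R]_(k.-1)) : 'rV[R]_(k.-1) :=
  v - (dotv (sigmav R k) v / dotv (sigmav R k) (sigmav R k)) *: sigmav R k.

Definition zcr (R : realType) (k : nat) : 'rV[R]_(k.-1) :=
  - vmap (@ln R) (sigmav R k)
  + (c0 R k * dotv (sigmav R k) (vmap (@ln R) (sigmav R k))) *: ones R _.

Definition Fq (R : realType) (k : nat) (z b : 'rV[R]_(k.-1)) : R :=
  normv (@Psigma R k (vmul (vmap (@cos R) b) (vmap (fun x => expR (- x)) z)))
  + normv (vmul (vmap (@sin R) b) (vmap (fun x => expR (- x)) z)).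

From HB Require Import structures.
From mathcomp Require Import all_boot all_order all_algebra.
From mathcomp Require Import all_classical all_reals all_analysis.
From mathcomp Require Import zify ring lra.
Import Order.TTheory GRing.Theory Num.Theory.
Import numFieldNormedType.Exports.
Local Open Scope ring_scope.

(* Write [w = cos b * exp (- z)] and [s = sin b * exp (- z)].  A small [s]
   forces [|cos b_j|] close to [1], so [exp (- z_j)] is close to [|w_j|]; a small
   [P_sigma w] makes [w] close to a multiple [lam * sigma].  Hence all the ratios
   [exp (- z_j) / sigma_j] are close to [|lam|].  On [Pi], [z - zcr] is a
   [sigma]-weighted mean of differences of the logarithms of these ratios, so
   [|z - zcr|] is linearly controlled, while the sign of [lam] tells whether
   [cos b] is near [1] or near [-1].  Near [b = pi] the components of [|sin b|]
   are comparable to those of [|b - pi|], which gives the linear bound (ii). *)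

Section VectorNorm.
Context {R : realType} {n : nat}.
Implicit Types u v : 'rV[R]_n.

Lemma onesE j : ones R n 0 j = 1.
Proof. by rewrite mxE. Qed.

Lemma dotvv_ge0 v : 0 <= dotv v v.
Proof. by apply: sumr_ge0 => i _; rewrite -expr2 sqr_ge0. Qed.

Lemma normv_ge0 v : 0 <= normv v.
Proof. exact: sqrtr_ge0. Qed.

Lemma normv_coord_le v j : `|v 0 j| <= normv v.
Proof.
rewrite /normv -sqrtr_sqr ler_sqrt ?dotvv_ge0 // /dotv (bigD1 j) //= expr2.
by rewrite lerDl; apply: sumr_ge0 => i _; rewrite -expr2 sqr_ge0.
Qed.

Lemma normv_le_scale u v a : 0 <= a -> (forall j, `|u 0 j| <= a * `|v 0 j|) ->
  normv u <= a * normv v.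
Proof.
move=> a0 le_uv; rewrite /normv -(ger0_norm a0) -sqrtr_sqr -sqrtrM ?sqr_ge0 //.
rewrite ler_sqrt; last by rewrite mulr_ge0 ?sqr_ge0 ?dotvv_ge0.
rewrite /dotv mulr_sumr; apply: ler_sum => i _.
have : `|u 0 i| ^+ 2 <= (a * `|v 0 i|) ^+ 2.
  by apply: lerXn2r; rewrite ?nnegrE ?mulr_ge0.
by rewrite exprMn !real_normK ?num_real // -!expr2.
Qed.

Lemma normv_le_coord_bound v a : (forall j, `|v 0 j| <= a) -> normv v <= n%:R * a.
Proof.
case: n v => [|m] v le_va; first by rewrite /normv /dotv big_ord0 sqrtr0 mul0r.
have a0 : 0 <= a := le_trans (normr_ge0 _) (le_va ord0).
rewrite /normv -(@ger0_norm _ (m.+1%:R * a)) ?mulr_ge0 // -sqrtr_sqr.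
rewrite ler_sqrt ?sqr_ge0 //.
apply: (@le_trans _ _ (\sum_(i < m.+1) a ^+ 2)).
  apply: ler_sum => i _; rewrite -expr2 -real_normK ?num_real //.
  by apply: lerXn2r; rewrite ?nnegrE.
rewrite sumr_const card_ord -mulr_natl exprMn.
have : (m.+1%:R : R) <= m.+1%:R ^+ 2 by rewrite -natrX ler_nat; nia.
have := sqr_ge0 a; nra.
Qed.

End VectorNorm.

Section RealFunctions.
Context {R : realType}.
Implicit Types x y a : R.

Lemma sin_mean_value x : exists2 c, `|c| <= `|x| & sin x = cos c * x.
Proof.
wlog x0 : x / 0 <= x => [wlog_x|].
  have [|/ltW] := leP 0 x; first exact: wlog_x.
  rewrite -oppr_ge0 => /wlog_x[c lec sinNx]; exists c; first by rewrite normrN in lec.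
  by apply: oppr_inj; rewrite -sinN sinNx mulrN.
have [c c0x sinx] := MVT_segment x0 (fun y _ => is_derive_sin y)
  (continuous_subspaceT (@continuous_sin R)).
exists c; last by move: sinx; rewrite sin0 !subr0.
by rewrite !ger0_norm ?(itvP c0x).
Qed.

Lemma abs_sin_le x : `|sin x| <= `|x|.
Proof.
have [c _ ->] := sin_mean_value x.
by rewrite normrM ler_piMl ?normr_ge0 ?cos_max.
Qed.

Lemma cos1_mul_abs_le_abs_sin x : `|x| <= 1 -> cos 1 * `|x| <= `|sin x|.
Proof.
move=> x1; have [c cx ->] := sin_mean_value x.
rewrite normrM ler_wpM2r // -[cos c]cos_norm; apply: le_trans (ler_norm _).
have pi2 := pi_ge2 R; have c1 : `|c| <= 1 := le_trans cx x1.
have [->|c_neq1] := eqVneq `|c| 1; first by [].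
by rewrite ltW // ltr_cos ?in_itv /= ?normr_ge0 ?lt_neqAle ?c_neq1 ?c1 //; lra.
Qed.

Lemma one_sub_abs_cos_le_sqr_sin x : 1 - `|cos x| <= sin x ^+ 2.
Proof.
rewrite sin2cos2 -real_normK ?num_real //.
have := normr_ge0 (cos x); have := cos_max x; nra.
Qed.

Lemma one_sub_abs_cos_le x : 1 - `|cos x| <= `|x|.
Proof.
apply: le_trans (one_sub_abs_cos_le_sqr_sin x) (le_trans _ (abs_sin_le x)).
by rewrite -real_normK ?num_real // expr2 ler_piMl ?normr_ge0 ?sin_max.
Qed.

Lemma expRN_bounds x r : `|x| <= r -> expR (- r) <= expR (- x) <= expR r.
Proof. by rewrite ler_norml => /andP[? ?]; rewrite !ler_expR; apply/andP; split; lra. Qed.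

Lemma ln_sub_abs_le a x y : 0 < a -> a <= x -> a <= y ->
  `|ln x - ln y| <= `|x - y| / a.
Proof.
wlog yx : x y / y <= x => [wlog_xy|] a0 ax ay.
  have [/wlog_xy|/ltW/wlog_xy] := leP y x; first exact.
  by rewrite distrC [`|x - y|]distrC; apply.
have x0 : 0 < x := lt_le_trans a0 ax; have y0 : 0 < y := lt_le_trans a0 ay.
rewrite !ger0_norm ?subr_ge0 ?ler_ln ?posrE //.
apply: (@le_trans _ _ ((x - y) / y)); last first.
  by rewrite ler_wpM2l ?subr_ge0 // lef_pV2 ?posrE.
rewrite -ln_div ?posrE // -[x / y](@subrK _ 1) addrC mulrBl divff ?gt_eqF //.
by apply: le_ln1Dx; rewrite ltrBrDl subrr divr_gt0.
Qed.

End RealFunctions.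

Section Sigma.
Variables (R : realType) (k : nat).
Hypothesis k_ge2 : (2 <= k)%N.

Local Notation sg := (sigmav R k).
Local Notation ksq := ((k * k)%N%:R : R).
Implicit Types z b v : 'rV[R]_(k.-1).

Lemma sigma_ge_half i : 1 / 2 <= sg 0 i.
Proof. by rewrite mxE ler_pM2r // ler1n; have := ltn_ord i; nia. Qed.

Lemma sigma_gt0 i : 0 < sg 0 i.
Proof. by apply: lt_le_trans (sigma_ge_half i). Qed.

Lemma sigma_le_ksq i : sg 0 i <= ksq.
Proof.
rewrite mxE ler_pdivrMr // -natrM ler_nat.
by have := ltn_ord i; nia.
Qed.

Lemma ksq_gt0 : 0 < ksq.
Proof. by rewrite ltr0n; nia. Qed.

Lemma dot_sigma_ones_gt0 : 0 < dotv sg (ones R _).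
Proof.
have k1 : (0 < k.-1)%N by case: k k_ge2 => [|[|]].
rewrite /dotv (bigD1 (Ordinal k1)) //= onesE mulr1 ltr_pwDl ?sigma_gt0 //.
by apply: sumr_ge0 => i _; rewrite onesE mulr1 ltW ?sigma_gt0.
Qed.

Lemma c0_gt0 : 0 < c0 R k.
Proof. by rewrite invr_gt0 dot_sigma_ones_gt0. Qed.

Lemma c0_mul_dot_sigma_ones : c0 R k * dotv sg (ones R _) = 1.
Proof. by rewrite mulVf // gt_eqF // dot_sigma_ones_gt0. Qed.

Lemma zcr_sub_coordE z j : PiSet z ->
  (z - zcr R k) 0 j = c0 R k * \sum_i sg 0 i *
    (ln (expR (- z 0 i) / sg 0 i) - ln (expR (- z 0 j) / sg 0 j)).
Proof.
move=> Piz; have lnE i : ln (expR (- z 0 i) / sg 0 i) = - z 0 i - ln (sg 0 i).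
  by rewrite ln_div ?posrE ?expR_gt0 ?sigma_gt0 // expRK.
have -> : \sum_i sg 0 i * (ln (expR (- z 0 i) / sg 0 i) - ln (expR (- z 0 j) / sg 0 j))
    = - dotv sg z - dotv sg (vmap (@ln R) sg) + dotv sg (ones R _) * (z 0 j + ln (sg 0 j)).
  rewrite /dotv -!sumrN mulr_suml -!big_split /=; apply: eq_bigr => i _.
  by rewrite !lnE !mxE; ring.
by rewrite Piz /zcr !mxE mulrDr mulrBr mulrA c0_mul_dot_sigma_ones; ring.
Qed.

Lemma zcr_sub_coord_le z (m lam D : R) j : PiSet z -> 0 < m ->
  (forall i, m <= expR (- z 0 i)) ->
  (forall i, `|expR (- z 0 i) - lam * sg 0 i| <= D) ->
  `|(z - zcr R k) 0 j| <= 4 * ksq * D / m.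
Proof.
move=> Piz m0 m_le near_lam; pose u i := expR (- z 0 i) / sg 0 i.
have u_ge i : m / ksq <= u i.
  rewrite ler_pdivrMr ?ksq_gt0 // mulrAC ler_pdivlMr ?sigma_gt0 //.
  by rewrite ler_pM ?(ltW m0) ?(ltW (sigma_gt0 i)) ?sigma_le_ksq.
have u_near i : `|u i - lam| <= 2 * D.
  have s_ge := sigma_ge_half i; have s_gt0 := sigma_gt0 i.
  have -> : u i - lam = (expR (- z 0 i) - lam * sg 0 i) / sg 0 i.
    by rewrite mulrBl mulfK ?lt0r_neq0.
  rewrite normrM normfV (gtr0_norm s_gt0) ler_pdivrMr //.
  by have := near_lam i; have := normr_ge0 (expR (- z 0 i) - lam * sg 0 i); nra.
have ln_u_near i : `|ln (u i) - ln (u j)| <= 4 * ksq * D / m.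
  have m_ksq0 : 0 < m / ksq by rewrite divr_gt0 ?ksq_gt0.
  apply: le_trans (ln_sub_abs_le _ _ _ m_ksq0 (u_ge i) (u_ge j)) _.
  have : `|u i - u j| <= 4 * D.
    by have := u_near i; have := u_near j; rewrite !ler_norml; lra.
  rewrite invf_div (_ : 4 * ksq * D / m = 4 * D * (ksq / m)); last by ring.
  by apply: ler_wpM2r; rewrite // divr_ge0 ?(ltW m0) ?(ltW ksq_gt0).
rewrite zcr_sub_coordE // normrM gtr0_norm ?c0_gt0 //.
apply: (@le_trans _ _ (c0 R k * \sum_i sg 0 i * (4 * ksq * D / m))).
  apply: ler_wpM2l; first exact: ltW c0_gt0.
  apply: le_trans (ler_norm_sum _ _ _) (ler_sum _ _) => i _.
  rewrite normrM gtr0_norm ?sigma_gt0 //.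
  by apply: ler_wpM2l; [exact: ltW (sigma_gt0 i)|exact: ln_u_near].
have sum_sigma : dotv sg (ones R _) = \sum_i sg 0 i.
  by apply: eq_bigr => i _; rewrite onesE mulr1.
by rewrite -mulr_suml mulrA -[leRHS]mul1r -c0_mul_dot_sigma_ones sum_sigma.
Qed.

Definition cos_exp b z : 'rV[R]_(k.-1) :=
  vmul (vmap (@cos R) b) (vmap (fun x => expR (- x)) z).
Definition sin_exp b z : 'rV[R]_(k.-1) :=
  vmul (vmap (@sin R) b) (vmap (fun x => expR (- x)) z).
Definition crit_dist z b : R :=
  normv (z - zcr R k) + Num.min (normv (vmap (@cos R) b - ones R _))
                                (normv (vmap (@cos R) b + ones R _)).

Lemma FqE z b : Fq z b = normv (Psigma (cos_exp b z)) + normv (sin_exp b z).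
Proof. by []. Qed.

Lemma cos_expE b z j : cos_exp b z 0 j = cos (b 0 j) * expR (- z 0 j).
Proof. by rewrite !mxE. Qed.

Lemma sin_expE b z j : sin_exp b z 0 j = sin (b 0 j) * expR (- z 0 j).
Proof. by rewrite !mxE. Qed.

Definition sigma_coef v : R := dotv sg v / dotv sg sg.

Lemma Psigma_coord_le v j : `|v 0 j - sigma_coef v * sg 0 j| <= normv (Psigma v).
Proof. by have := normv_coord_le (Psigma v) j; rewrite !mxE. Qed.

Lemma expN_sub_sigma_le z b j :
  `|expR (- z 0 j) - `|sigma_coef (cos_exp b z)| * sg 0 j|
    <= normv (Psigma (cos_exp b z)) + (1 - `|cos (b 0 j)|) * expR (- z 0 j).
Proof.
have e0 := expR_gt0 (- z 0 j); set lam := sigma_coef _.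
have -> : expR (- z 0 j) - `|lam| * sg 0 j =
    (`|cos_exp b z 0 j| - `|lam * sg 0 j|) + (1 - `|cos (b 0 j)|) * expR (- z 0 j).
  by rewrite cos_expE !normrM (gtr0_norm e0) (gtr0_norm (sigma_gt0 j)); ring.
apply: le_trans (ler_normD _ _) _; apply: lerD.
  exact: le_trans (ler_dist_dist _ _) (Psigma_coord_le _ j).
by rewrite ger0_norm // mulr_ge0 ?(ltW e0) // subr_ge0 cos_max.
Qed.

Lemma normv_zcr_sub_le z b (m M t : R) : PiSet z -> 0 < m ->
  (forall j, m <= expR (- z 0 j) <= M) -> (forall j, 1 - `|cos (b 0 j)| <= t) ->
  normv (z - zcr R k)
    <= k.-1%:R * (4 * ksq / m) * (normv (Psigma (cos_exp b z)) + M * t).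
Proof.
move=> Piz m0 e_bounds cos_near.
set D := _ + M * t.
rewrite (_ : _ * D = k.-1%:R * (4 * ksq * D / m)); last by ring.
apply: normv_le_coord_bound => j.
apply: zcr_sub_coord_le Piz m0 (fun i => proj1 (andP (e_bounds i))) _ => i.
apply: le_trans (expN_sub_sigma_le z b i) _; rewrite lerD2l.
have /andP[_ eM] := e_bounds i; have := expR_gt0 (- z 0 i).
have := cos_near i; have := cos_max (b 0 i); nra.
Qed.

(* The sign of the multiplier of [sigma] in [cos_exp b z] decides whether
   [cos b] is close to [1] or to [-1]. *)
Lemma min_normv_cos_ones_le z b (m t : R) : 0 < m ->
  (forall j, m <= expR (- z 0 j)) -> (forall j, 1 - `|cos (b 0 j)| <= t) ->
  normv (Psigma (cos_exp b z)) < (1 - t) * m ->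
  Num.min (normv (vmap (@cos R) b - ones R _)) (normv (vmap (@cos R) b + ones R _))
    <= k.-1%:R * t.
Proof.
move=> m0 m_le cos_near p_lt; pose lam := sigma_coef (cos_exp b z).
have t1 : 0 < 1 - t by have := normv_ge0 (Psigma (cos_exp b z)); nra.
have coord j : `|cos (b 0 j) * expR (- z 0 j) - lam * sg 0 j| < (1 - t) * m.
  by rewrite -cos_expE; apply: le_lt_trans (Psigma_coord_le _ j) p_lt.
have cos_e_bound j : (1 - t) * m <= `|cos (b 0 j)| * expR (- z 0 j).
  have := m_le j; have := cos_near j; have := normr_ge0 (cos (b 0 j)); nra.
rewrite ge_min; apply/orP.
have [lam0|lam0] := leP 0 lam; [left|right]; apply: normv_le_coord_bound => j;
  rewrite !mxE; have lam_sg := sigma_gt0 j.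
- have c0 : 0 <= cos (b 0 j).
    rewrite leNgt; apply/negP => cneg; move: (coord j) (cos_e_bound j).
    by rewrite (ltr0_norm cneg) ltr_norml; nra.
  rewrite ler_norml; have := cos_near j; have := cos_le1 (b 0 j).
  by rewrite (ger0_norm c0); lra.
- have c0 : cos (b 0 j) <= 0.
    rewrite leNgt; apply/negP => cpos; move: (coord j) (cos_e_bound j).
    by rewrite (gtr0_norm cpos) ltr_norml; nra.
  rewrite ler_norml; have := cos_near j; have := cos_geN1 (b 0 j).
  by rewrite (ler0_norm c0); lra.
Qed.

Lemma crit_dist_le_Fq (m M : R) : 0 < m -> m <= M -> exists2 C, 0 < C &
  forall z b, PiSet z -> (forall j, m <= expR (- z 0 j) <= M) ->
  Fq z b <= m / 4 -> crit_dist z b <= C * Fq z b.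
Proof.
move=> m0 mM; have k1 : (0 : R) < k.-1%:R by rewrite ltr0n; case: k k_ge2 => [|[|]].
have M_m_ge0 : 0 <= M / (4 * m) by rewrite divr_ge0 ?mulr_ge0; lra.
exists (k.-1%:R * (4 * ksq / m) * (1 + M / (4 * m)) + k.-1%:R / (4 * m)).
  apply: ltr_wpDl; last by rewrite divr_gt0 // mulr_gt0.
  apply: mulr_ge0; last lra.
  by rewrite mulr_ge0 ?divr_ge0 ?mulr_ge0 ?(ltW k1) ?(ltW ksq_gt0) ?(ltW m0).
move=> z b Piz e_bounds F_small; rewrite FqE in F_small *.
set p := normv (Psigma _) in F_small *; set q := normv (sin_exp _ _) in F_small *.
have p0 : 0 <= p := normv_ge0 _; have q0 : 0 <= q := normv_ge0 _.
set y := (p + q) / m.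
have y0 : 0 <= y by apply: divr_ge0; [lra|exact: ltW].
have y_le : y <= 1 / 4 by rewrite ler_pdivrMr //; lra.
have sin_le j : `|sin (b 0 j)| <= y.
  have /andP[m_le _] := e_bounds j; have := normv_coord_le (sin_exp b z) j.
  rewrite sin_expE normrM (gtr0_norm (expR_gt0 _)) -/q /y ler_pdivlMr //.
  have := normr_ge0 (sin (b 0 j)); nra.
have cos_near j : 1 - `|cos (b 0 j)| <= y / 4.
  apply: le_trans (one_sub_abs_cos_le_sqr_sin _) _.
  rewrite -real_normK ?num_real //; have := sin_le j; have := normr_ge0 (sin (b 0 j)); nra.
have m_le j : m <= expR (- z 0 j) by case/andP: (e_bounds j).
have zcr_le := @normv_zcr_sub_le z b m M (y / 4) Piz m0 e_bounds cos_near.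
have min_le := @min_normv_cos_ones_le z b m (y / 4) m0 m_le cos_near.
rewrite -/p in zcr_le min_le.
have ym : y * m = p + q by rewrite divfK ?lt0r_neq0.
rewrite /crit_dist; apply: le_trans (lerD zcr_le (min_le _)) _.
  by rewrite mulrBl mul1r mulrAC ym; lra.
set A := k.-1%:R * _; have A0 : 0 <= A.
  by rewrite mulr_ge0 ?divr_ge0 ?mulr_ge0 ?(ltW k1) ?(ltW ksq_gt0) ?(ltW m0).
have -> : y / 4 = (p + q) / (4 * m) by rewrite /y; field; lra.
have -> : M * ((p + q) / (4 * m)) = M / (4 * m) * (p + q) by ring.
have := mulr_ge0 A0 q0; have := mulr_ge0 A0 (mulr_ge0 M_m_ge0 q0).
lra.
Qed.

Lemma Fq_ge_near_pi : exists2 C, 0 < C & forall z b, PiSet z ->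
  normv (z - zcr R k) + normv (b - pi *: ones R _) <= 1 / 2 ->
  C^-1 * (normv (z - zcr R k) + normv (b - pi *: ones R _)) <= Fq z b.
Proof.
set rho := normv (zcr R k) + 1; set m := expR (- rho); set M := expR rho.
have m0 : 0 < m := expR_gt0 _; have M0 : 0 < M := expR_gt0 _.
have cm0 : 0 < cos 1 * m by rewrite mulr_gt0 ?cos1_gt0.
set A := k.-1%:R * (4 * ksq / m); set B := (cos 1 * m)^-1.
have A0 : 0 <= A by rewrite mulr_ge0 ?divr_ge0 ?mulr_ge0 ?(ltW ksq_gt0) ?(ltW m0).
have B0 : 0 < B by rewrite invr_gt0.
have AM0 : 0 <= A * M by rewrite mulr_ge0 ?(ltW M0).
exists (A + (A * M + 1) * B); first by rewrite ltr_wpDl // mulr_gt0 //; lra.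
move=> z b Piz near; rewrite FqE; set p := normv (Psigma _); set q := normv (sin_exp _ _).
set zeta := z - zcr R k in near *; set beta := b - _ in near *.
have zeta0 := normv_ge0 zeta; have beta0 := normv_ge0 beta.
have e_bounds j : m <= expR (- z 0 j) <= M.
  apply: expRN_bounds; rewrite -[z](subrK (zcr R k)) -/zeta mxE.
  apply: le_trans (ler_normD _ _) _.
  by have := normv_coord_le zeta j; have := normv_coord_le (zcr R k) j; rewrite /rho; lra.
have bE j : b 0 j = beta 0 j + pi by rewrite !mxE; ring.
have beta_q : normv beta <= B * q.
  apply: normv_le_scale (ltW B0) _ => j.
  rewrite sin_expE bE sinDpi mulNr normrN normrM (gtr0_norm (expR_gt0 _)).
  rewrite ler_pdivlMl //; have /andP[m_le _] := e_bounds j.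
  have beta_le1 : `|beta 0 j| <= 1 by have := normv_coord_le beta j; lra.
  have := cos1_mul_abs_le_abs_sin _ beta_le1; have := normr_ge0 (sin (beta 0 j)).
  have := normr_ge0 (beta 0 j); have := @cos1_gt0 R; nra.
have cos_near j : 1 - `|cos (b 0 j)| <= normv beta.
  rewrite bE cosDpi normrN.
  exact: le_trans (one_sub_abs_cos_le _) (normv_coord_le _ _).
have zeta_le := @normv_zcr_sub_le z b m M (normv beta) Piz m0 e_bounds cos_near.
rewrite -/p -/A -/zeta in zeta_le.
rewrite mulrC ler_pdivrMr; last by rewrite ltr_wpDl // mulr_gt0 //; lra.
have p0 : 0 <= p := normv_ge0 _; have q0 : 0 <= q := normv_ge0 _.
have := ler_wpM2l AM0 beta_q; have := mulr_ge0 A0 q0.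
have := mulr_ge0 p0 (mulr_ge0 (addr_ge0 AM0 ler01) (ltW B0)); lra.
Qed.

End Sigma.

Theorem mainTheorem10 (R : realType) (k : nat) (hk : (2 <= k)%N) :
  (* (i) *)
  (forall Rad : R, 0 < Rad ->
    exists eps1 : R, 0 < eps1 /\
    forall eps : R, 0 < eps -> eps < eps1 ->
    exists eta : R, 0 < eta /\
    forall z b : 'rV[R]_(k.-1),
      @PiSet R k z ->
      normv z <= Rad ->
      eps <= normv (z - @zcr R k)
             + Num.min (normv (vmap (@cos R) b - @ones R _))
                       (normv (vmap (@cos R) b + @ones R _)) ->
      eta <= @Fq R k z b)
  /\
  (* (ii) *)
  (exists eps0 C : R, 0 < eps0 /\ 0 < C /\
    forall z b : 'rV[R]_(k.-1),
      @PiSet R k z ->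
      normv (z - @zcr R k) + normv (b - pi *: @ones R _) <= eps0 ->
      C^-1 * (normv (z - @zcr R k) + normv (b - pi *: @ones R _)) <= @Fq R k z b).
Proof.
split.
- move=> Rad Rad0; exists 1; split => // eps eps0 _.
  set m := expR (- Rad); have m0 : 0 < m := expR_gt0 _.
  have mM : m <= expR Rad by rewrite ler_expR; lra.
  have [C C0 dist_le] := @crit_dist_le_Fq R k hk m (expR Rad) m0 mM.
  exists (Num.min (m / 4) (eps / C)); split; first by rewrite lt_min !divr_gt0.
  move=> z b Piz z_le far; rewrite leNgt; apply/negP; rewrite lt_min => /andP[F_m F_eps].
  have e_bounds j : m <= expR (- z 0 j) <= expR Rad.
    exact/expRN_bounds/(le_trans (normv_coord_le z j) z_le).
  have := dist_le z b Piz e_bounds (ltW F_m).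
  by move: F_eps far; rewrite ltr_pdivlMr // /crit_dist; lra.
- have [C C0 Fq_ge] := @Fq_ge_near_pi R k hk.
  by exists (1 / 2), C.
Qed.
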